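(* Let $n\ge3$, let $S_n$ act on $V=\mathbb{C}^n$ by permutations, and fix $a,b\in\mathbb{C}$. For every $g\in S_n$, the component $\phi_g$ of $\phi(\kappa^C_{\mathrm{penta}},\kappa^L_{\mathrm{tri}})$ is identically zero.
   Context: $S_n$ acts by $\sigma e_i=e_{\sigma(i)}$; $V^g$ is the fixed space of $g$. $\kappa^L_{\mathrm{tri}}=\sum_g\kappa^L_gg$ is the linear 2-cochain supported on 3-cycles with $\kappa^L_{(ijk)}(e_i,e_j)=\kappa^L_{(ijk)}(e_j,e_k)=\kappa^L_{(ijk)}(e_k,e_i)=a(e_i+e_j+e_k)+b\sum_{l\notin\{i,j,k\}}e_l$ and $\kappa^L_{(ijk)}(e_l,e_m)=0$ whenever $e_l$ or $e_m$ lies in $V^{(ijk)}$. $\kappa^C_{\mathrm{penta}}=\sum_g\kappa^C_gg$ is the constant 2-cochain with $\kappa^C_g=0$ unless $g$ is a 5-cycle, and for a 5-cycle $g$, $\kappa^C_g(e_i,e_j)=(a-b)^2([g]_{ij}-[g]_{ji}-2[g^2]_{ij}+2[g^2]_{ji})$, where $[h]_{ij}=1$ if $i=h(j)$ and $0$ otherwise. For $\alpha$ constant and $\beta$ linear 2-cochains, $\phi(\alpha,\beta)=\sum_g\phi_gg$ with $\phi_g=\sum_{xy=g}\phi_{x,y}$ and $\phi_{x,y}(v_1,v_2,v_3)=\alpha_x(v_1+yv_1,\beta_y(v_2,v_3))+\alpha_x(v_2+yv_2,\beta_y(v_3,v_1))+\alpha_x(v_3+yv_3,\beta_y(v_1,v_2))$.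 *)

From HB Require Import structures.
From mathcomp Require Import all_boot all_order all_algebra all_fingroup.
From mathcomp Require Import reals complex.
Set Implicit Arguments. Unset Strict Implicit. Unset Printing Implicit Defensive.
Import Order.TTheory GRing.Theory Num.Theory.
Local Open Scope ring_scope.

Section Defs.
Variables (R : realType) (n : nat).
Local Notation C := (R[i]).
Local Notation V := ('rV[C]_n).
Local Notation Sn := ({perm 'I_n}).

Definition ebas (i : 'I_n) : V := delta_mx 0 i.

(* permutation action: sigma e_i = e_{sigma i}, i.e. (sigma v)_j = v_{sigma^-1 j} *)
Definition pact (s : Sn) (v : V) : V := \row_j v 0 ((s^-1)%g j).

Definition is_kcycle (k : nat) (g : Sn) : bool :=
  (#|[set i | g i != i]| == k) && [exists i, #|porbit g i| == k].

Definition pmat (h : Sn) (i j : 'I_n) : C := (i == h j)%:R.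

Definition bilinC (c : 'I_n -> 'I_n -> C) (u v : V) : C :=
  \sum_(i < n) \sum_(j < n) u 0 i * v 0 j * c i j.
Definition bilinV (c : 'I_n -> 'I_n -> V) (u v : V) : V :=
  \sum_(i < n) \sum_(j < n) (u 0 i * v 0 j) *: c i j.

(* The vector a(e_i+e_j+e_k) + b sum_{l notin {i,j,k}} e_l for g = (ijk):
   entry a on the support of g, b off it. *)
Definition wtri (a b : C) (g : Sn) : V :=
  \row_l (if g l != l then a else b).

(* kappa^L_(ijk) on basis pairs: (e_x, e_{g x}) |-> w for x moved by g
   (these are the pairs (e_i,e_j),(e_j,e_k),(e_k,e_i)), alternating, and 0 on
   all other pairs (in particular whenever one argument lies in V^g). *)
Definition kappaL_basis (a b : C) (g : Sn) (l m : 'I_n) : V :=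
  if (g l != l) && (m == g l) then wtri a b g
  else if (g m != m) && (l == g m) then - wtri a b g
  else 0.

Definition kappaL_tri (a b : C) (g : Sn) : V -> V -> V :=
  if is_kcycle 3 g then bilinV (kappaL_basis a b g) else fun _ _ => 0.

Definition kappaC_basis (a b : C) (g : Sn) (i j : 'I_n) : C :=
  (a - b) ^+ 2 * (pmat g i j - pmat g j i
                  - 2%:R * pmat (g * g)%g i j + 2%:R * pmat (g * g)%g j i).

Definition kappaC_penta (a b : C) (g : Sn) : V -> V -> C :=
  if is_kcycle 5 g then bilinC (kappaC_basis a b g) else fun _ _ => 0.

Definition phi_xy (alpha : Sn -> V -> V -> C) (beta : Sn -> V -> V -> V)
  (x y : Sn) (v1 v2 v3 : V) : C :=
  alpha x (v1 + pact y v1) (beta y v2 v3)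
  + alpha x (v2 + pact y v2) (beta y v3 v1)
  + alpha x (v3 + pact y v3) (beta y v1 v2).

(* phi_g = sum_{xy = g} phi_{x,y}, where xy is the composite x o y (first y,
   then x); in mathcomp's convention (s * t) i = t (s i), so xy = (y * x)%g. *)
Definition phi_g (alpha : Sn -> V -> V -> C) (beta : Sn -> V -> V -> V)
  (g : Sn) (v1 v2 v3 : V) : C :=
  \sum_(x : Sn) \sum_(y : Sn | (y * x)%g == g) phi_xy alpha beta x y v1 v2 v3.

End Defs.

From HB Require Import structures.
From mathcomp Require Import all_boot all_order all_algebra all_fingroup.
From mathcomp Require Import reals complex ring.
Set Implicit Arguments. Unset Strict Implicit. Unset Printing Implicit Defensive.
Import GRing.Theory.

(* Expanding both cochains in the standard basis, phi_{x,y}(e_p, e_q, e_r) for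
   x = y^-1 g is (a - b)^3 times an integer [phi_weight g y p q r] depending
   only on the permutations: the constant part b of kappa^L_y is killed by
   kappa^C_x, which vanishes on constant vectors.  So it suffices that these
   weights sum to zero over y.  A weight vanishes unless p, q, r lie in the
   joint support U of y and x, and unless the supports of the 3-cycle y and
   the 5-cycle x meet (otherwise x preserves supp y and the kappa^C
   coefficient cancels), so 5 <= |U| <= 7 and g is supported in U.  Grouping
   the y by U and relabelling U as {0, ..., |U| - 1}, the sum over each group
   becomes a statement about S_5, S_6 or S_7, which is checked by evaluation. *)

Section Coefficients.
Variable T : eqType.
Implicit Types (f x xi y : T -> T) (i l m p q r : T).
Local Open Scope ring_scope.

Definition moved_ind f i : int := if f i == i then 0 else 1.

Definition penta_coef x xi y i : int :=
  moved_ind y (xi i) - moved_ind y (x i)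
  - 2 * moved_ind y (xi (xi i)) + 2 * moved_ind y (x (x i)).

Definition tri_sign y l m : int :=
  if (y l != l) && (m == y l) then 1
  else if (y m != m) && (l == y m) then -1 else 0.

Definition tri_weight y (c : T -> int) p q r : int :=
  tri_sign y q r * (c p + c (y p)) + tri_sign y r p * (c q + c (y q))
  + tri_sign y p q * (c r + c (y r)).

Definition kcycle_on (dom : seq T) (k : nat) f : bool :=
  (count (fun j => f j != j) dom == k)
  && has (fun j => (iter k f j == j) && all (fun e => iter e f j != j) (iota 1 k.-1)) dom.

End Coefficients.

Section Weight.
Variable n : nat.
Implicit Types (g x y : {perm 'I_n}) (i l m p q r z : 'I_n).

Definition phi_weight g y p q r : int :=
  let x := (y^-1 * g)%g in
  if is_kcycle 3 y && is_kcycle 5 x then tri_weight y (penta_coef x x^-1%g y) p q r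
  else 0%R.

Definition joint_supp g y := [set z | (y z != z) || ((y^-1 * g)%g z != z)].

Lemma phi_weight_rot g y p q r : phi_weight g y p q r = phi_weight g y q r p.
Proof. by rewrite /phi_weight /tri_weight; case: ifP => // _; rewrite -addrA addrC. Qed.

Lemma tri_sign_fixedl y l m : y l = l -> tri_sign y l m = 0%R.
Proof.
move=> yl; rewrite /tri_sign yl eqxx /=; case: ifP => // /andP [ym /eqP lE].
by move: ym; rewrite -(perm_inj (etrans yl lE)) yl eqxx.
Qed.

Lemma tri_sign_fixedr y l m : y m = m -> tri_sign y l m = 0%R.
Proof.
move=> ym; rewrite /tri_sign ym eqxx /=; case: ifP => // /andP [yl /eqP mE].
by move: yl; rewrite -(perm_inj (etrans ym mE)) ym eqxx.
Qed.

Lemma penta_coef_fixed x y i : y i = i -> x i = i -> penta_coef x x^-1%g y i = 0%R.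
Proof.
move=> yi xi; have xVi : x^-1%g i = i by rewrite -{1}xi permK.
by rewrite /penta_coef /moved_ind !xVi !xi yi eqxx.
Qed.

Lemma phi_weight_notin_joint_supp g y p q r :
  p \notin joint_supp g y -> phi_weight g y p q r = 0%R.
Proof.
rewrite inE negb_or !negbK => /andP [/eqP yp /eqP xp].
rewrite /phi_weight /tri_weight; case: ifP => // _.
rewrite (tri_sign_fixedr r yp) (tri_sign_fixedl q yp) yp penta_coef_fixed //.
by rewrite !mul0r !addr0 mulr0.
Qed.

Lemma moved_in_joint_supp g y z : g z != z -> z \in joint_supp g y.
Proof.
move=> gz; rewrite inE; have [yz|//] := eqVneq (y z) z.
by rewrite /= permM -{1}yz permK.
Qed.

Lemma penta_coef_disjoint x y i :
  (forall z, y z != z -> x z = z) -> penta_coef x x^-1%g y i = 0%R.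
Proof.
move=> xy.
have movedx j : moved_ind y (x j) = moved_ind y j.
  have [yj|/xy -> //] := eqVneq (y j) j.
  rewrite /moved_ind yj eqxx; have [//|yxj] := eqVneq (y (x j)) (x j).
  by have /xy/perm_inj xjE := yxj; move: yxj; rewrite xjE yj eqxx.
have movedxV j : moved_ind y (x^-1%g j) = moved_ind y j.
  by rewrite -{2}(permKV x j) movedx.
by rewrite /penta_coef !movedx !movedxV subrr sub0r addNr.
Qed.

Lemma phi_weight_neq0 g y p q r : phi_weight g y p q r != 0%R ->
  [/\ p \in joint_supp g y, q \in joint_supp g y, r \in joint_supp g y
     & 4 < #|joint_supp g y| < 8].
Proof.
move=> nz; split.
- by apply: contraNT nz => /phi_weight_notin_joint_supp ->.
- by apply: contraNT nz; rewrite phi_weight_rot => /phi_weight_notin_joint_supp ->.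
- by apply: contraNT nz; rewrite -phi_weight_rot => /phi_weight_notin_joint_supp ->.
move: nz; rewrite /phi_weight; set x := (y^-1 * g)%g.
case: ifP => [/andP [/andP [/eqP cy _] /andP [/eqP cx _]] nz|]; last by rewrite eqxx.
set A := [set z | y z != z] in cy; set B := [set z | x z != z] in cx.
have -> : joint_supp g y = A :|: B by apply/setP => z; rewrite !inE.
rewrite -{1}cx subset_leq_card ?subsetUr //= ltnNge; apply: contra nz => le8.
have AB0 : #|A :&: B| == 0.
  by rewrite -leqn0 -(leq_add2l #|A :|: B|) cardsUI cy cx addn0.
have disj z : y z != z -> x z = z.
  move=> yz; apply/eqP; apply: contraTT AB0 => xz.
  by rewrite -lt0n card_gt0; apply/set0Pn; exists z; rewrite !inE yz.
by rewrite /tri_weight !(penta_coef_disjoint _ disj) !addr0 !mulr0 !addr0.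
Qed.
End Weight.

(* A list [s] with [perm_eq s (iota 0 k)] encodes the permutation [i |-> s`_i]
   of 0, ..., k - 1; [lapp s] is the identity beyond k. *)
Definition lapp (s : seq nat) (i : nat) : nat := nth i s i.

Section ListPerm.
Variables (k : nat) (s : seq nat).
Hypothesis s_perm : perm_eq s (iota 0 k).

Lemma size_lperm : size s = k.
Proof. by rewrite (perm_size s_perm) size_iota. Qed.

Lemma mem_lperm j : (j \in s) = (j < k).
Proof. by rewrite (perm_mem s_perm) mem_iota. Qed.

Lemma lapp_lt j : j < k -> lapp s j < k.
Proof. by move=> j_lt; rewrite -mem_lperm mem_nth ?size_lperm. Qed.

Lemma index_lt j : j < k -> index j s < k.
Proof. by move=> j_lt; rewrite -size_lperm index_mem mem_lperm. Qed.

Lemma lapp_index j : j < k -> lapp s (index j s) = j.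
Proof.
by move=> j_lt; rewrite /lapp (set_nth_default j) ?size_lperm ?index_lt // nth_index ?mem_lperm.
Qed.

Lemma index_lapp j : j < k -> index (lapp s j) s = j.
Proof.
move=> j_lt; rewrite /lapp (set_nth_default 0) ?size_lperm //.
by rewrite index_uniq ?size_lperm // (perm_uniq s_perm) iota_uniq.
Qed.
End ListPerm.

Definition three_cycles (k : nat) : seq (seq nat) :=
  [seq y <- permutations (iota 0 k) | kcycle_on (iota 0 k) 3 (lapp y)].

(* [lapp x] is [y^-1 g]; its coefficients are tabulated once per pair (g, y). *)
Definition covering_term (k : nat) (g y : seq nat) : option (seq nat * seq int) :=
  let x := mkseq (fun j => lapp g (index j y)) k in
  if kcycle_on (iota 0 k) 5 (lapp x)
     && all (fun j => (lapp y j != j) || (lapp x j != j)) (iota 0 k)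
  then Some (y, mkseq (penta_coef (lapp x) (fun j => lapp y (index j g)) (lapp y)) k)
  else None.

Definition local_check (k : nat) : bool :=
  let ys := three_cycles k in
  all (fun g => let ts := pmap (covering_term k g) ys in
    all (fun p => all (fun q => all (fun r =>
      foldr +%R 0%R [seq tri_weight (lapp t.1) (nth 0%R t.2) p q r | t <- ts] == 0%R)
    (iota 0 k)) (iota 0 k)) (iota 0 k)) (permutations (iota 0 k)).

Lemma local_check5 : local_check 5. Proof. vm_cast_no_check (erefl true). Qed.
Lemma local_check6 : local_check 6. Proof. vm_cast_no_check (erefl true). Qed.
Lemma local_check7 : local_check 7. Proof. vm_cast_no_check (erefl true). Qed.

Lemma local_checkP k g p q r : local_check k -> g \in permutations (iota 0 k) ->
  p < k -> q < k -> r < k ->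
  (\sum_(y <- permutations (iota 0 k) | kcycle_on (iota 0 k) 3 (lapp y))
     oapp (fun t => tri_weight (lapp t.1) (nth 0 t.2) p q r) 0 (covering_term k g y) = 0)%R.
Proof.
move=> /allP /(_ g) check g_perm p_lt q_lt r_lt.
have {check} /allP /(_ p) := check g_perm; rewrite mem_iota p_lt => /(_ isT).
move=> /allP /(_ q); rewrite mem_iota q_lt => /(_ isT).
move=> /allP /(_ r); rewrite mem_iota r_lt => /(_ isT) /eqP.
by rewrite foldrE big_map big_pmap big_filter.
Qed.

Lemma card_porbit_eq (T : finType) (s : {perm T}) x k : 0 < k ->
  (#|porbit s x| == k) = (iter k s x == x) && all (fun e => iter e s x != x) (iota 1 k.-1).
Proof.
move=> k_gt0; set m := #|porbit s x|.
have m_gt0 : 0 < m by rewrite lt0n card_porbit_neq0.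
have iter_m : iter m s x = x by apply: iter_porbit.
have iter_lt e : 0 < e < m -> iter e s x != x.
  case/andP=> e_gt0 e_lt_m; have uniq_tr := uniq_traject_porbit s x.
  rewrite -(nth_traject s e_lt_m) -[x in _ != x](nth_traject s m_gt0).
  by rewrite nth_uniq ?size_traject // -lt0n.
apply/eqP/andP => [m_eq_k|[iter_k /allP iter_ne]].
  split; first by rewrite -m_eq_k iter_m.
  apply/allP => e; rewrite mem_iota add1n prednK // -m_eq_k; exact: iter_lt.
have [m_lt_k|k_lt_m|//] := ltngtP m k.
  by have := iter_ne m; rewrite mem_iota add1n prednK // m_gt0 m_lt_k iter_m eqxx => /(_ isT).
by have := iter_lt k; rewrite k_gt0 k_lt_m (eqP iter_k) eqxx => /(_ isT).
Qed.

Section Relabel.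
Variables (n : nat) (U : {set 'I_n}) (z0 : 'I_n).
Local Notation k := #|U|.
Local Notation lperm s := (perm_eq s (iota 0 k)).
Implicit Types (P Q x xi y : {perm 'I_n}) (f h fx fxi fy : nat -> nat) (s : seq nat) (z : 'I_n).

Definition nthU j := nth z0 (enum U) j.
Definition indexU z := index z (enum U).

Lemma nthU_in j : j < k -> nthU j \in U.
Proof. by move=> j_lt; rewrite -mem_enum mem_nth -?cardE. Qed.

Lemma indexU_lt z : z \in U -> indexU z < k.
Proof. by move=> zU; rewrite cardE index_mem mem_enum. Qed.

Lemma indexU_nthU j : j < k -> indexU (nthU j) = j.
Proof. by move=> j_lt; rewrite /indexU index_uniq ?enum_uniq -?cardE. Qed.

Lemma nthU_indexU z : z \in U -> nthU (indexU z) = z.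
Proof. by move=> zU; rewrite /nthU nth_index ?mem_enum. Qed.

Lemma eq_nthU j j' : j < k -> j' < k -> (nthU j == nthU j') = (j == j').
Proof.
by move=> j_lt j'_lt; apply/eqP/eqP => [E|->] //; rewrite -(indexU_nthU j_lt) E indexU_nthU.
Qed.

(* [f] is [P] read through the labelling [nthU] of [U] by 0, ..., #|U| - 1. *)
Definition represents P f :=
  (forall z, z \notin U -> P z = z)
  /\ (forall j, j < k -> f j < k /\ P (nthU j) = nthU (f j)).

Lemma represents_mul P Q f h :
  represents P f -> represents Q h -> represents (P * Q)%g (h \o f).
Proof.
move=> [P_fix Pf] [Q_fix Qh]; split=> [z zU|j j_lt]; first by rewrite permM P_fix ?Q_fix.
have [fj_lt PE] := Pf j j_lt; have [hfj_lt QE] := Qh _ fj_lt.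
by rewrite permM PE QE.
Qed.

Lemma represents_inv P s :
  lperm s -> represents P (lapp s) -> represents P^-1%g (index^~ s).
Proof.
move=> s_perm [P_fix Ps]; split=> [z zU|j j_lt].
  by apply: (@perm_inj _ P); rewrite permKV P_fix.
split; first exact: index_lt.
apply: (@perm_inj _ P); rewrite permKV.
by have [_ ->] := Ps _ (index_lt s_perm j_lt); rewrite (lapp_index s_perm).
Qed.

Lemma represents_mkseq P f : represents P f -> represents P (lapp (mkseq f k)).
Proof. by move=> [P_fix Pf]; split=> // j j_lt; rewrite /lapp nth_mkseq //; apply: Pf. Qed.

Lemma represents_fixed P f j : represents P f -> j < k ->
  (P (nthU j) == nthU j) = (f j == j).
Proof. by move=> [_ Pf] j_lt; have [fj_lt ->] := Pf j j_lt; rewrite eq_nthU. Qed.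

Lemma represents_iter P f j e : represents P f -> j < k ->
  iter e P (nthU j) = nthU (iter e f j) /\ iter e f j < k.
Proof.
move=> [_ Pf] j_lt; elim: e => [|e [IHe IHe_lt]] //=.
by rewrite IHe; have [? ->] := Pf _ IHe_lt.
Qed.

Lemma represents_card P f : represents P f ->
  #|[set z | P z != z]| = count (fun j => f j != j) (iota 0 k).
Proof.
move=> Pf; have [P_fix _] := Pf.
have -> : #|[set z | P z != z]| = size [seq z <- enum U | P z != z].
  have uniq_l : uniq [seq z <- enum U | P z != z] by rewrite filter_uniq ?enum_uniq.
  rewrite -(card_uniqP uniq_l); apply: eq_card => z.
  rewrite inE mem_filter mem_enum; have [zU|zU] := boolP (z \in U); first by rewrite andbT.
  by rewrite P_fix // eqxx.
rewrite size_filter -(mkseq_nth z0 (enum U)) -cardE count_map.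
by apply: eq_in_count => j; rewrite mem_iota => /= j_lt; rewrite (represents_fixed Pf).
Qed.

Lemma represents_kcycle P f c : represents P f -> 1 < c ->
  is_kcycle c P = kcycle_on (iota 0 k) c f.
Proof.
move=> Pf c_gt1; have [P_fix _] := Pf.
have iter_eq j e : j < k -> (iter e P (nthU j) == nthU j) = (iter e f j == j).
  by move=> j_lt; have [-> ?] := represents_iter e Pf j_lt; rewrite eq_nthU.
rewrite /is_kcycle /kcycle_on (represents_card Pf); congr andb.
apply/existsP/hasP => [[z]|[j]].
  rewrite card_porbit_eq ?(ltnW c_gt1) //; case/andP => iter_c /allP iter_ne.
  have zU : z \in U.
    have one_in : 1 \in iota 1 c.-1 by rewrite mem_iota leqnn add1n prednK ?(ltnW c_gt1).
    by apply: contraTT (iter_ne 1 one_in) => zU; rewrite /= P_fix ?eqxx.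
  exists (indexU z); first by rewrite mem_iota indexU_lt.
  rewrite -iter_eq ?indexU_lt // nthU_indexU // iter_c /=.
  by apply/allP => e /iter_ne; rewrite -iter_eq ?indexU_lt // nthU_indexU.
rewrite mem_iota /= => j_lt /andP [iter_c /allP iter_ne].
exists (nthU j); rewrite card_porbit_eq ?(ltnW c_gt1) // iter_eq // iter_c /=.
by apply/allP => e /iter_ne; rewrite iter_eq.
Qed.


Lemma moved_ind_represents P f j : represents P f -> j < k ->
  moved_ind P (nthU j) = moved_ind f j.
Proof. by move=> Pf j_lt; rewrite /moved_ind (represents_fixed Pf). Qed.

Lemma penta_coef_represents x xi y fx fxi fy j :
  represents x fx -> represents xi fxi -> represents y fy -> j < k ->
  penta_coef x xi y (nthU j) = penta_coef fx fxi fy j.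
Proof.
move=> [_ Rx] [_ Rxi] Ry j_lt; rewrite /penta_coef.
have [xj_lt ->] := Rx j j_lt; have [xxj_lt ->] := Rx _ xj_lt.
have [xij_lt ->] := Rxi j j_lt; have [xixij_lt ->] := Rxi _ xij_lt.
by rewrite !(moved_ind_represents Ry).
Qed.

Lemma tri_sign_represents y fy l m : represents y fy -> l < k -> m < k ->
  tri_sign y (nthU l) (nthU m) = tri_sign fy l m.
Proof.
move=> [_ Ry] l_lt m_lt; rewrite /tri_sign.
have [yl_lt ->] := Ry l l_lt; have [ym_lt ->] := Ry m m_lt.
by rewrite !eq_nthU.
Qed.

Lemma tri_weight_represents y fy (c : 'I_n -> int) (c' : nat -> int) p q r :
  represents y fy -> (forall j, j < k -> c (nthU j) = c' j) -> p < k -> q < k -> r < k ->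
  tri_weight y c (nthU p) (nthU q) (nthU r) = tri_weight fy c' p q r.
Proof.
move=> Ry cE p_lt q_lt r_lt; have [_ R] := Ry; rewrite /tri_weight.
have [yp_lt ->] := R p p_lt; have [yq_lt ->] := R q q_lt; have [yr_lt ->] := R r r_lt.
by rewrite !(tri_sign_represents Ry) // !cE.
Qed.

Lemma joint_supp_represents g y fy fx : represents y fy -> represents (y^-1 * g)%g fx ->
  (joint_supp g y == U) = all (fun j => (fy j != j) || (fx j != j)) (iota 0 k).
Proof.
move=> Ry Rx; have [y_fix _] := Ry; have [x_fix _] := Rx.
apply/eqP/allP => [U_def j|all_moved].
  rewrite mem_iota => /= j_lt; have : nthU j \in joint_supp g y by rewrite U_def nthU_in.
  by rewrite inE (represents_fixed Ry) // (represents_fixed Rx).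
apply/setP => z; rewrite inE; have [zU|zU] := boolP (z \in U); last first.
  by rewrite y_fix // x_fix // eqxx.
have := all_moved (indexU z); rewrite mem_iota indexU_lt // => /(_ isT).
by rewrite -(represents_fixed Ry) ?indexU_lt // -(represents_fixed Rx) ?indexU_lt // nthU_indexU.
Qed.


Definition embed_fun s z := if z \in U then nthU (lapp s (indexU z)) else z.

Lemma embed_fun_inj s : lperm s -> injective (embed_fun s).
Proof.
move=> s_perm z z'; rewrite /embed_fun.
have embed_in z1 : z1 \in U -> nthU (lapp s (indexU z1)) \in U.
  by move=> z1U; rewrite nthU_in ?(lapp_lt s_perm) ?indexU_lt.
case: (boolP (z \in U)) => zU; case: (boolP (z' \in U)) => z'U.
- move/eqP; rewrite eq_nthU ?(lapp_lt s_perm) ?indexU_lt // => /eqP E.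
  have := congr1 (index^~ s) E; rewrite !(index_lapp s_perm) ?indexU_lt // => E'.
  by rewrite -(nthU_indexU zU) -(nthU_indexU z'U) E'.
- by move=> E; move: z'U; rewrite -E embed_in.
- by move=> E; move: zU; rewrite E embed_in.
- by [].
Qed.

Definition embed_perm s : {perm 'I_n} :=
  if injectiveP (embed_fun s) is ReflectT inj then perm inj else 1%g.

Lemma embed_permE s : lperm s -> embed_perm s =1 embed_fun s.
Proof.
move=> s_perm z; rewrite /embed_perm; case: injectiveP => [inj|[]]; first by rewrite permE.
exact: embed_fun_inj.
Qed.

Lemma represents_embed s : lperm s -> represents (embed_perm s) (lapp s).
Proof.
move=> s_perm; split=> [z zU|j j_lt]; first by rewrite embed_permE // /embed_fun (negbTE zU).
by rewrite embed_permE // /embed_fun nthU_in // indexU_nthU // (lapp_lt s_perm).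
Qed.

Definition relabel P : seq nat := mkseq (fun j => indexU (P (nthU j))) k.

Lemma relabel_embed s : lperm s -> relabel (embed_perm s) = s.
Proof.
move=> s_perm; apply: (@eq_from_nth _ 0); first by rewrite size_mkseq (size_lperm s_perm).
move=> j; rewrite size_mkseq => j_lt; rewrite nth_mkseq //.
have [_ /(_ j j_lt) [sj_lt ->]] := represents_embed s_perm.
by rewrite indexU_nthU // /lapp (set_nth_default 0) ?(size_lperm s_perm).
Qed.

Section Supported.
Variable P : {perm 'I_n}.
Hypothesis P_fix : forall z, z \notin U -> P z = z.

Lemma perm_in_supp z : (P z \in U) = (z \in U).
Proof.
apply/idP/idP => [|zU]; first by apply: contraTT => zU; rewrite P_fix.
by apply: contraT => PzU; move: zU; rewrite -(perm_inj (P_fix PzU)) (negbTE PzU).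
Qed.

Lemma relabel_lperm : lperm (relabel P).
Proof.
have sub : {subset relabel P <= iota 0 k}.
  move=> i /mapP [j]; rewrite mem_iota => /= j_lt ->.
  by rewrite mem_iota /= indexU_lt ?perm_in_supp ?nthU_in.
have uniq_r : uniq (relabel P).
  rewrite map_inj_in_uniq ?iota_uniq // => j j'; rewrite !mem_iota /= => j_lt j'_lt E.
  have : nthU (indexU (P (nthU j))) = nthU (indexU (P (nthU j'))) by rewrite E.
  rewrite !nthU_indexU ?perm_in_supp ?nthU_in // => /perm_inj /eqP.
  by rewrite eq_nthU // => /eqP.
have size_le : size (iota 0 k) <= size (relabel P) by rewrite size_iota size_mkseq.
have [_ size_eq] := uniq_min_size uniq_r sub size_le.
by apply: uniq_perm; rewrite ?iota_uniq.
Qed.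

Lemma represents_relabel : represents P (lapp (relabel P)).
Proof.
split=> // j j_lt; have PjU : P (nthU j) \in U by rewrite perm_in_supp nthU_in.
by rewrite /lapp nth_mkseq // indexU_lt // nthU_indexU.
Qed.

Lemma embed_relabel : embed_perm (relabel P) = P.
Proof.
apply/permP => z; rewrite embed_permE ?relabel_lperm // /embed_fun.
case: (boolP (z \in U)) => zU; last by rewrite P_fix.
by rewrite /lapp nth_mkseq ?indexU_lt // nthU_indexU // nthU_indexU ?perm_in_supp.
Qed.
End Supported.

Lemma sum_embed (F : {perm 'I_n} -> int) (Pr : pred {perm 'I_n}) :
  (forall P, Pr P -> forall z, z \notin U -> P z = z) ->
  (\sum_(P | Pr P) F P
   = \sum_(s <- permutations (iota 0 k) | Pr (embed_perm s)) F (embed_perm s))%R.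
Proof.
move=> Pr_fix; rewrite -(big_map embed_perm Pr F).
have uniq_m : uniq (map embed_perm (permutations (iota 0 k))).
  rewrite map_inj_in_uniq ?permutations_uniq // => s s'.
  rewrite !mem_permutations => s_perm s'_perm E.
  by rewrite -(relabel_embed s_perm) E relabel_embed.
rewrite [RHS]big_mkcond (big_uniq _ uniq_m) -big_mkcondr /=.
apply: eq_bigl => P; have [PrP|] := boolP (Pr P); rewrite ?andbF ?andbT //.
apply/esym/mapP; exists (relabel P); last by rewrite embed_relabel //; apply: Pr_fix.
by rewrite mem_permutations relabel_lperm //; apply: Pr_fix.
Qed.

Section Restricted.
Variable g : {perm 'I_n}.
Hypothesis g_fix : forall z, z \notin U -> g z = z.

Lemma phi_weight_embed s p q r : lperm s -> p < k -> q < k -> r < k ->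
  (if joint_supp g (embed_perm s) == U
   then phi_weight g (embed_perm s) (nthU p) (nthU q) (nthU r) else 0)%R
  = (if kcycle_on (iota 0 k) 3 (lapp s)
     then oapp (fun t => tri_weight (lapp t.1) (nth 0 t.2) p q r) 0
            (covering_term k (relabel g) s)
     else 0)%R.
Proof.
move=> s_perm p_lt q_lt r_lt.
set y := embed_perm s; set gl := relabel g.
have Ry : represents y (lapp s) := represents_embed s_perm.
have gl_perm : lperm gl := relabel_lperm g_fix.
have Rg : represents g (lapp gl) := represents_relabel g_fix.
set fx := fun j => lapp gl (index j s).
have Rx : represents (y^-1 * g)%g (lapp (mkseq fx k)).
  exact/represents_mkseq/(represents_mul (represents_inv s_perm Ry) Rg).
have RxV : represents (y^-1 * g)^-1%g (fun j => lapp s (index j gl)).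
  by rewrite invMg invgK; exact: represents_mul (represents_inv gl_perm Rg) Ry.
rewrite /phi_weight (joint_supp_represents Ry Rx).
rewrite (represents_kcycle Ry) // (represents_kcycle Rx) // /covering_term -/fx.
case: (kcycle_on _ 3 _) (kcycle_on _ 5 _) (all _ _) => [] [] [] //=.
apply: (tri_weight_represents Ry) => // j j_lt.
by rewrite nth_mkseq // (penta_coef_represents Rx RxV Ry).
Qed.

Lemma phi_weight_local_sum p q r : local_check k -> p < k -> q < k -> r < k ->
  (\sum_(y | joint_supp g y == U) phi_weight g y (nthU p) (nthU q) (nthU r) = 0)%R.
Proof.
move=> check p_lt q_lt r_lt.
have supp_U y : joint_supp g y == U -> forall z, z \notin U -> y z = z.
  by move=> /eqP <- z; rewrite inE negb_or => /andP [/negPn /eqP].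
have g_in : relabel g \in permutations (iota 0 k).
  by rewrite mem_permutations relabel_lperm.
rewrite (sum_embed _ supp_U) big_mkcond -[RHS](local_checkP check g_in p_lt q_lt r_lt).
rewrite [RHS]big_mkcond; apply: eq_big_seq => s; rewrite mem_permutations => s_perm.
exact: phi_weight_embed.
Qed.
End Restricted.
End Relabel.

Lemma phi_weight_sum_eq0 n (g : {perm 'I_n}) p q r : (\sum_y phi_weight g y p q r = 0)%R.
Proof.
rewrite (partition_big (joint_supp g) xpredT) //=; apply: big1 => U _.
have [y0 /eqP U_def|no_y] := pickP (fun y => joint_supp g y == U); last first.
  by rewrite big_pred0.
have g_fix z : z \notin U -> g z = z.
  move=> zU; apply/eqP; apply: contraNT zU; rewrite -U_def; exact: moved_in_joint_supp.
have [/and4P [pU qU rU U_card]|not_local] :=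
  boolP [&& p \in U, q \in U, r \in U & 4 < #|U| < 8].
  have check : local_check #|U|.
    have : #|U| \in iota 5 3 by rewrite mem_iota.
    rewrite !inE => /or3P [] /eqP ->;
      [exact: local_check5 | exact: local_check6 | exact: local_check7].
  rewrite -(nthU_indexU p pU) -(nthU_indexU p qU) -(nthU_indexU p rU).
  by apply: phi_weight_local_sum; rewrite ?indexU_lt.
apply: big1 => y /eqP yU; apply/eqP; apply: contraNT not_local.
by case/phi_weight_neq0; rewrite yU => -> -> -> ->.
Qed.

Section Cochains.
Variables (R : realType) (n : nat) (a b : R[i]).
Local Notation C := R[i].
Local Notation V := 'rV[C]_n.
Local Open Scope ring_scope.
Implicit Types (g h x y : {perm 'I_n}) (u v w : V).

Lemma sum_pmatl w h i : \sum_j w 0 j * pmat R h i j = w 0 (h^-1%g i).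
Proof.
rewrite (bigD1 (h^-1%g i)) //= /pmat permKV eqxx mulr1 big1 ?addr0 // => j ji.
by rewrite (_ : (i == h j) = false) ?mulr0 //; apply: contraNF ji => /eqP ->; rewrite permK.
Qed.

Lemma sum_pmatr w h i : \sum_j w 0 j * pmat R h j i = w 0 (h i).
Proof.
rewrite (bigD1 (h i)) //= /pmat eqxx mulr1 big1 ?addr0 // => j /negbTE ->.
by rewrite mulr0.
Qed.

Lemma wtri_entry y l : wtri a b y 0 l = b + (a - b) * (moved_ind y l)%:~R.
Proof.
by rewrite mxE /moved_ind; case: eqP => _ /=; rewrite ?mulr0 ?addr0 // mulr1 addrC subrK.
Qed.

Lemma kappaC_penta_wtri x y u : is_kcycle 5 x ->
  kappaC_penta a b x u (wtri a b y)
  = (a - b) ^+ 3 * \sum_i u 0 i * (penta_coef x x^-1%g y i)%:~R.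
Proof.
move=> x5; rewrite /kappaC_penta x5 /bilinC mulr_sumr; apply: eq_bigr => i _.
set w := wtri a b y.
transitivity (u 0 i * (a - b) ^+ 2 *
  ((\sum_j w 0 j * pmat R x i j) - (\sum_j w 0 j * pmat R x j i)
   - 2 * (\sum_j w 0 j * pmat R (x * x)%g i j) + 2 * (\sum_j w 0 j * pmat R (x * x)%g j i))).
  rewrite !mulr_sumr -!sumrN -!big_split /= mulr_sumr; apply: eq_bigr => j _.
  rewrite /kappaC_basis; ring.
rewrite !sum_pmatl !sum_pmatr invMg !permM /w !wtri_entry /penta_coef.
rewrite !intrD !intrN !intrM; ring.
Qed.

Lemma kappaL_triE y v w : is_kcycle 3 y ->
  kappaL_tri a b y v w = (\sum_l \sum_m v 0 l * w 0 m * (tri_sign y l m)%:~R) *: wtri a b y.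
Proof.
move=> y3; rewrite /kappaL_tri y3 /bilinV scaler_suml; apply: eq_bigr => l _.
rewrite scaler_suml; apply: eq_bigr => m _; rewrite -[RHS]scalerA; congr (_ *: _).
rewrite /kappaL_basis /tri_sign; case: ifP => _; first by rewrite mulr1z scale1r.
by case: ifP => _; rewrite ?mulrN1z ?scaleN1r ?mulr0z ?scale0r.
Qed.

Lemma kappaC_pentaZr x u c w : kappaC_penta a b x u (c *: w) = c * kappaC_penta a b x u w.
Proof.
rewrite /kappaC_penta; case: ifP => _; last by rewrite mulr0.
rewrite /bilinC mulr_sumr; apply: eq_bigr => i _; rewrite mulr_sumr; apply: eq_bigr => j _.
by rewrite mxE; ring.
Qed.

Lemma sum_add_pact y u (F : 'I_n -> C) :
  \sum_i (u + pact y u) 0 i * F i = \sum_p u 0 p * (F p + F (y p)).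
Proof.
rewrite (eq_bigr (fun i => u 0 i * F i + u 0 (y^-1%g i) * F i)); last first.
  by move=> i _; rewrite !mxE mulrDl.
rewrite big_split /= [X in _ + X](reindex_inj (@perm_inj _ y)) /= -big_split.
by apply: eq_bigr => p _; rewrite permK mulrDr.
Qed.

Lemma sum2_mul_sum (A B D H : 'I_n -> C) (K : 'I_n -> 'I_n -> C) (c : C) :
  (\sum_q \sum_r B q * D r * K q r) * (c * \sum_p A p * H p) =
  c * \sum_p \sum_q \sum_r A p * B q * D r * (K q r * H p).
Proof.
rewrite mulrCA; congr (_ * _); rewrite mulrC mulr_suml; apply: eq_bigr => p _.
rewrite mulr_sumr; apply: eq_bigr => q _; rewrite mulr_sumr; apply: eq_bigr => r _.
ring.
Qed.

Lemma sum3_rot (F : 'I_n -> 'I_n -> 'I_n -> C) :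
  \sum_p \sum_q \sum_r F p q r = \sum_q \sum_r \sum_p F p q r.
Proof. by rewrite exchange_big; apply: eq_bigr => q _; rewrite exchange_big. Qed.

Lemma phi_xy_weight g y v1 v2 v3 :
  phi_xy (kappaC_penta a b) (kappaL_tri a b) (y^-1 * g)%g y v1 v2 v3 =
  (a - b) ^+ 3 * \sum_p \sum_q \sum_r v1 0 p * v2 0 q * v3 0 r * (phi_weight g y p q r)%:~R.
Proof.
rewrite /phi_xy /phi_weight; set x := (y^-1 * g)%g.
have [/andP [y3 x5]|] := boolP (is_kcycle 3 y && is_kcycle 5 x); last first.
  rewrite big1 ?mulr0 => [|p _]; last first.
    by rewrite big1 // => q _; rewrite big1 // => r _; rewrite mulr0z mulr0.
  rewrite negb_and => /orP [y3|x5].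
    by rewrite /kappaL_tri (negbTE y3) -(scale0r (0 : V)) !kappaC_pentaZr !mul0r !addr0.
  by rewrite /kappaC_penta (negbTE x5) !addr0.
rewrite /= !kappaL_triE // !kappaC_pentaZr !kappaC_penta_wtri // !sum_add_pact /tri_weight.
move: (penta_coef x x^-1%g y) (tri_sign y) => P S; set s := fun l m => (S l m)%:~R : C.
rewrite (sum2_mul_sum (v1 0) (v2 0) (v3 0) _ s) (sum2_mul_sum (v2 0) (v3 0) (v1 0) _ s).
rewrite (sum2_mul_sum (v3 0) (v1 0) (v2 0) _ s) -!mulrDr; congr (_ * _).
rewrite [X in _ + X + _]sum3_rot [X in _ + X + _]sum3_rot [X in _ + X]sum3_rot.
rewrite -!big_split /=; apply: eq_bigr => p _; rewrite -!big_split /=; apply: eq_bigr => q _.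
rewrite -!big_split /=; apply: eq_bigr => r _.
rewrite /s; ring.
Qed.

End Cochains.

Local Open Scope ring_scope.

Lemma phi_gE (R : realType) n (alpha : {perm 'I_n} -> 'rV[R[i]]_n -> 'rV[R[i]]_n -> R[i])
    (beta : {perm 'I_n} -> 'rV[R[i]]_n -> 'rV[R[i]]_n -> 'rV[R[i]]_n) g v1 v2 v3 :
  phi_g alpha beta g v1 v2 v3 = \sum_y phi_xy alpha beta (y^-1 * g)%g y v1 v2 v3.
Proof.
rewrite /phi_g (exchange_big_dep xpredT) //=; apply: eq_bigr => y _.
by rewrite (big_pred1 (y^-1 * g)%g) // => x; rewrite (can2_eq (mulKg y) (mulKVg y)).
Qed.

Lemma phi_g_weight (R : realType) n (a b : R[i]) g (v1 v2 v3 : 'rV[R[i]]_n) :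
  phi_g (@kappaC_penta R n a b) (@kappaL_tri R n a b) g v1 v2 v3 =
  (a - b) ^+ 3 * \sum_p \sum_q \sum_r
     v1 0 p * v2 0 q * v3 0 r * (\sum_y phi_weight g y p q r)%:~R.
Proof.
rewrite phi_gE; under eq_bigr do rewrite phi_xy_weight.
rewrite -mulr_sumr; congr (_ * _).
rewrite exchange_big; apply: eq_bigr => p _; rewrite exchange_big; apply: eq_bigr => q _.
rewrite exchange_big; apply: eq_bigr => r _.
by rewrite -mulr_sumr mulrz_sumr.
Qed.

Theorem proposition7p7 (R : realType) (n : nat) (hn : (3 <= n)%N) (a b : R[i])
  (g : {perm 'I_n}) (v1 v2 v3 : 'rV[R[i]]_n) :
  phi_g (@kappaC_penta R n a b) (@kappaL_tri R n a b) g v1 v2 v3 = 0.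
Proof.
rewrite phi_g_weight big1 ?mulr0 // => p _; rewrite big1 // => q _; rewrite big1 // => r _.
by rewrite phi_weight_sum_eq0 mulr0.
Qed.
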